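(* Let $0\le a<b$, let $\alpha\in(0,1]$, and let $k:[a,b]\to\mathbb{R}$ be a continuous nonnegative map, differentiable on $[a,b]$, with $k(t)\neq 0$ and $k'(t)\neq 0$. Let $f:[a,b]\to\mathbb{R}$ be continuous on $[a,b]$ and $\alpha$-differentiable at every point of $(a,b)$. Then there exists $c\in(a,b)$ such that $$D^{\alpha}(f)(c)=\frac{f(b)-f(a)}{\frac{k^{\alpha}(b)}{\alpha}-\frac{k^{\alpha}(a)}{\alpha}}.$$
   Context: For $k$ as in the claim, $f:[a,b]\to\mathbb{R}$, $\alpha\in(0,1]$ and $t\in(a,b)$, the generalized fractional derivative of $f$ of order $\alpha$ at $t$ is $$D^{\alpha}(f)(t)=f^{(\alpha)}(t):=\lim_{\varepsilon\to 0}\frac{f\left(t-k(t)+k(t)\,e^{\varepsilon\frac{(k(t))^{-\alpha}}{k'(t)}}\right)-f(t)}{\varepsilon},$$ and $f$ is called $\alpha$-differentiable at $t$ if this limit exists. Here $k^{\alpha}(x)$ denotes $(k(x))^{\alpha}$. *)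

From Stdlib Require Import Reals.
From Coquelicot Require Import Coquelicot.
Open Scope R_scope.

Definition in_Icc (a b x : R) : Prop := a <= x <= b.

Definition continuous_on_Icc (f : R -> R) (a b : R) : Prop :=
  forall t, in_Icc a b t ->
    filterlim f (within (in_Icc a b) (locally t)) (locally (f t)).

Definition is_derive_on_Icc (k k' : R -> R) (a b : R) : Prop :=
  forall t, in_Icc a b t ->
    filterlim (fun x => (k x - k t) / (x - t))
      (within (fun x => in_Icc a b x /\ x <> t) (locally t)) (locally (k' t)).

(* The difference quotient in the definition of the generalized
   fractional derivative (k' is the derivative of k). *)
Definition gfd_quotient (k k' f : R -> R) (alpha t eps : R) : R :=
  (f (t - k t + k t * exp (eps * (Rpower (k t) (- alpha)) / k' t)) - f t) / eps.

Definition alpha_differentiable (k k' f : R -> R) (alpha t : R) : Prop :=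
  ex_finite_lim (gfd_quotient k k' f alpha t) 0.

Definition gen_frac_deriv (k k' f : R -> R) (alpha t : R) : R :=
  real (Lim (gfd_quotient k k' f alpha t) 0).

From Stdlib Require Import Reals Lra.
From Coquelicot Require Import Coquelicot.
Open Scope R_scope.

(* The alpha-derivative is a reparametrised classical derivative: near [eps = 0]
   the map [eps |-> t - k t + k t * exp (eps * k(t)^(-alpha) / k'(t))] is a local
   diffeomorphism onto a neighbourhood of [t] with derivative [k(t)^(1-alpha) / k'(t)]
   at [0], so an alpha-differentiable [f] is differentiable at [t] with
   [f'(t) = D^alpha f(t) * k'(t) * k(t)^(alpha-1) = D^alpha f(t) * (k^alpha / alpha)'(t)].
   Cauchy's mean value theorem for [f] and [k^alpha / alpha] then gives the claim.  The
   denominator does not vanish because [k' <> 0] forces [k a <> k b] (Rolle) and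
   [x |-> x^alpha] is injective on the positive reals. *)

Lemma ball_Rabs (x e y : R) : ball x e y <-> Rabs (y - x) < e.
Proof. reflexivity. Qed.

Lemma derivable_pt_lim_of_is_lim (f : R -> R) (x l : R) :
  is_lim (fun h => (f (x + h) - f x) / h) 0 l -> derivable_pt_lim f x l.
Proof. intros H. apply uniqueness_step3, is_lim_Reals_0, H. Qed.

Lemma is_derive_on_Icc_interior (k k' : R -> R) (a b t : R) :
  is_derive_on_Icc k k' a b -> a < t < b -> is_derive k t (k' t).
Proof.
  intros Hk Ht.
  assert (Hq : is_lim (fun x => (k x - k t) / (x - t)) t (k' t)).
  { apply (filterlim_filter_le_1 (F := within (fun x => in_Icc a b x /\ x <> t) (locally t)));
      [|apply Hk; unfold in_Icc; lra].
    intros P HP. unfold within in HP. change (locally t (fun x => x <> t -> P x)).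
    assert (Hab : locally t (fun x => a < x < b)).
    { apply (locally_interval _ t a b); simpl; tauto. }
    generalize (filter_and _ _ HP Hab). apply filter_imp.
    intros x [HPx Hx] Hxt. apply HPx. split; [unfold in_Icc; lra|exact Hxt]. }
  apply is_derive_Reals, derivable_pt_lim_of_is_lim.
  eapply is_lim_ext; [|apply (is_lim_comp_lin (fun x => (k x - k t) / (x - t)) 1 t 0); [|lra]].
  - intros h. simpl. replace (1 * h + t) with (t + h) by ring.
    replace (t + h - t) with h by ring. reflexivity.
  - simpl. rewrite Rmult_0_r, Rplus_0_l. exact Hq.
Qed.

Lemma continuous_on_Icc_id (a b : R) : continuous_on_Icc (fun x => x) a b.
Proof.
  intros t _. apply (filterlim_filter_le_1 (F := locally t)).
  - apply filter_le_within.
  - apply filterlim_id.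
Qed.

Lemma continuous_on_Icc_comp (g k : R -> R) (a b : R) :
  continuous_on_Icc k a b -> (forall t, in_Icc a b t -> continuity_pt g (k t)) ->
  continuous_on_Icc (fun x => g (k x)) a b.
Proof.
  intros Hk Hg t Ht. apply (filterlim_comp _ _ _ _ _ _ (locally (k t))).
  - exact (Hk t Ht).
  - apply continuity_pt_filterlim, Hg, Ht.
Qed.

(* Extending by constants outside [a, b] turns the one-sided continuity of
   [continuous_on_Icc] into the two-sided [continuity_pt] required by [MVT]. *)
Definition clamp (a b x : R) : R := Rmax a (Rmin b x).

Lemma clamp_id (a b x : R) : in_Icc a b x -> clamp a b x = x.
Proof. unfold in_Icc, clamp, Rmax, Rmin. intros. repeat destruct Rle_dec; lra. Qed.

Lemma clamp_in_Icc (a b x : R) : a <= b -> in_Icc a b (clamp a b x).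
Proof. unfold in_Icc, clamp, Rmax, Rmin. intros. repeat destruct Rle_dec; lra. Qed.

Lemma Rabs_clamp_sub_le (a b x t : R) : in_Icc a b t ->
  Rabs (clamp a b x - t) <= Rabs (x - t).
Proof.
  unfold in_Icc, clamp, Rmax, Rmin, Rabs. intros.
  repeat destruct Rle_dec; repeat destruct Rcase_abs; lra.
Qed.

Lemma continuity_pt_comp_clamp (phi : R -> R) (a b t : R) : a <= b ->
  continuous_on_Icc phi a b -> in_Icc a b t ->
  continuity_pt (fun x => phi (clamp a b x)) t.
Proof.
  intros Hab Hphi Ht. apply continuity_pt_filterlim.
  rewrite (clamp_id a b t Ht).
  apply (filterlim_comp _ _ _ _ phi _ (within (in_Icc a b) (locally t))); [|exact (Hphi t Ht)].
  intros P [eps HP]. exists eps. intros y Hy. apply HP.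
  - apply ball_Rabs. apply ball_Rabs in Hy.
    eapply Rle_lt_trans; [apply Rabs_clamp_sub_le, Ht|exact Hy].
  - apply clamp_in_Icc, Hab.
Qed.

Lemma is_derive_comp_clamp (phi : R -> R) (a b t l : R) : a < t < b ->
  is_derive phi t l -> is_derive (fun x => phi (clamp a b x)) t l.
Proof.
  intros Ht. apply is_derive_ext_loc.
  apply (locally_interval _ t a b); simpl; [lra|lra|].
  intros x Hax Hxb. rewrite clamp_id; [reflexivity|unfold in_Icc; lra].
Qed.

Lemma cauchy_mvt_Icc (f g f' g' : R -> R) (a b : R) : a < b ->
  continuous_on_Icc f a b -> continuous_on_Icc g a b ->
  (forall t, a < t < b -> is_derive f t (f' t)) ->
  (forall t, a < t < b -> is_derive g t (g' t)) ->
  exists c, a < c < b /\ (g b - g a) * f' c = (f b - f a) * g' c.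
Proof.
  intros Hab Hf Hg Hf' Hg'.
  set (F := fun x => f (clamp a b x)).
  set (G := fun x => g (clamp a b x)).
  assert (HF : forall t, a < t < b -> derivable_pt_lim F t (f' t)).
  { intros t Ht. apply is_derive_Reals, is_derive_comp_clamp, Hf'; exact Ht. }
  assert (HG : forall t, a < t < b -> derivable_pt_lim G t (g' t)).
  { intros t Ht. apply is_derive_Reals, is_derive_comp_clamp, Hg'; exact Ht. }
  assert (Ha : in_Icc a b a) by (unfold in_Icc; lra).
  assert (Hb : in_Icc a b b) by (unfold in_Icc; lra).
  destruct (MVT F G a b (fun t Ht => exist _ (f' t) (HF t Ht))
              (fun t Ht => exist _ (g' t) (HG t Ht))) as [c [Hc E]].
  - exact Hab.
  - intros t Ht. apply continuity_pt_comp_clamp; [lra|exact Hf|exact Ht].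
  - intros t Ht. apply continuity_pt_comp_clamp; [lra|exact Hg|exact Ht].
  - exists c. split; [exact Hc|]. simpl in E.
    unfold F, G in E. rewrite !(clamp_id a b a Ha), !(clamp_id a b b Hb) in E. exact E.
Qed.

Lemma neq_endpoints_of_derive_neq0 (k k' : R -> R) (a b : R) : a < b ->
  continuous_on_Icc k a b -> (forall t, a < t < b -> is_derive k t (k' t)) ->
  (forall t, a < t < b -> k' t <> 0) -> k a <> k b.
Proof.
  intros Hab Hk Hk' Hk'_nz E.
  destruct (cauchy_mvt_Icc k (fun x => x) k' (fun _ => 1) a b) as [c [Hc Ec]].
  - exact Hab.
  - exact Hk.
  - apply continuous_on_Icc_id.
  - exact Hk'.
  - intros t _. auto_derive; reflexivity.
  - apply (Hk'_nz c Hc). rewrite E, Rminus_diag, Rmult_0_l in Ec.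
    apply Rmult_integral in Ec. destruct Ec; [lra|assumption].
Qed.

Lemma is_derive_Rpower_div (alpha x : R) : 0 < alpha -> 0 < x ->
  is_derive (fun y => Rpower y alpha / alpha) x (Rpower x (alpha - 1)).
Proof.
  intros Ha Hx. apply is_derive_Reals.
  replace (Rpower x (alpha - 1)) with (alpha * Rpower x (alpha - 1) / alpha) by (field; lra).
  apply derivable_pt_lim_div_scal, derivable_pt_lim_power, Hx.
Qed.

Lemma is_derive_Rpower_div_comp (k : R -> R) (alpha t l : R) : 0 < alpha -> 0 < k t ->
  is_derive k t l -> is_derive (fun x => Rpower (k x) alpha / alpha) t (l * Rpower (k t) (alpha - 1)).
Proof.
  intros Ha Hk Hl. apply (is_derive_comp (fun y => Rpower y alpha / alpha) k); [|exact Hl].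
  apply is_derive_Rpower_div; assumption.
Qed.

Lemma continuous_on_Icc_Rpower_div_comp (k : R -> R) (alpha a b : R) : 0 < alpha ->
  continuous_on_Icc k a b -> (forall t, in_Icc a b t -> 0 < k t) ->
  continuous_on_Icc (fun x => Rpower (k x) alpha / alpha) a b.
Proof.
  intros Ha Hk Hk_pos. apply (continuous_on_Icc_comp (fun y => Rpower y alpha / alpha) k a b Hk).
  intros t Ht. apply derivable_continuous_pt.
  exists (Rpower (k t) (alpha - 1)).
  apply is_derive_Reals, is_derive_Rpower_div; [exact Ha|apply Hk_pos, Ht].
Qed.

Lemma Rpower_inj_l (x y alpha : R) : 0 < x -> 0 < y -> alpha <> 0 ->
  Rpower x alpha = Rpower y alpha -> x = y.
Proof.
  intros Hx Hy Ha E. apply ln_inv; [exact Hx|exact Hy|].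
  apply (Rmult_eq_reg_l alpha); [|exact Ha].
  rewrite <- !ln_Rpower, E. reflexivity.
Qed.

Lemma Rpower_div_sub_neq0 (x y alpha : R) : 0 < x -> 0 < y -> alpha <> 0 -> x <> y ->
  Rpower y alpha / alpha - Rpower x alpha / alpha <> 0.
Proof.
  intros Hx Hy Ha Hxy E. apply Hxy, (Rpower_inj_l _ _ alpha Hx Hy Ha).
  apply (Rmult_eq_reg_r (/ alpha)); [lra|apply Rinv_neq_0_compat, Ha].
Qed.

Lemma is_derive_of_exp_reparam (f : R -> R) (t K c L : R) : 0 < K -> c <> 0 ->
  is_derive (fun e => f (t - K + K * exp (e * c))) 0 L -> is_derive f t (L / (K * c)).
Proof.
  intros HK Hc HF.
  (* [phi] inverts [e |-> t - K + K * exp (e * c)] near [t]. *)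
  set (phi := fun x => ln (1 + (x - t) / K) / c).
  assert (Hphi_t : phi t = 0).
  { unfold phi. replace (1 + (t - t) / K) with 1 by (field; lra). rewrite ln_1. field. exact Hc. }
  assert (Hphi' : is_derive phi t (/ (K * c))).
  { unfold phi. auto_derive.
    - replace (1 + (t - t) / K) with 1 by (field; lra). lra.
    - replace (t + - t) with 0 by ring. field. lra. }
  apply is_derive_ext_loc with (fun x => f (t - K + K * exp (phi x * c))).
  - apply (locally_interval _ t (t - K) p_infty); simpl; [lra|exact I|].
    intros x Hx _. unfold phi.
    replace (ln (1 + (x - t) / K) / c * c) with (ln (1 + (x - t) / K)) by (field; exact Hc).
    rewrite exp_ln.
    + f_equal. field. lra.
    + replace (1 + (x - t) / K) with ((x - (t - K)) / K) by (field; lra).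
      apply Rdiv_lt_0_compat; lra.
  - replace (L / (K * c)) with (scal (/ (K * c)) L)
      by (unfold scal; simpl; unfold mult; simpl; field; lra).
    apply (is_derive_comp (fun e => f (t - K + K * exp (e * c))) phi).
    + rewrite Hphi_t. exact HF.
    + exact Hphi'.
Qed.

Lemma alpha_differentiable_is_derive (k k' f : R -> R) (alpha t : R) :
  0 < k t -> k' t <> 0 -> alpha_differentiable k k' f alpha t ->
  is_derive f t (gen_frac_deriv k k' f alpha t * k' t * Rpower (k t) (alpha - 1)).
Proof.
  intros Hk Hk' Hdiff.
  set (D := gen_frac_deriv k k' f alpha t).
  set (c := Rpower (k t) (- alpha) / k' t).
  assert (Hpow : k t * Rpower (k t) (- alpha) * Rpower (k t) (alpha - 1) = 1).
  { rewrite <- (Rpower_1 (k t)) at 1 by exact Hk.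
    rewrite <- !Rpower_plus. replace (1 + - alpha + (alpha - 1)) with 0 by ring.
    apply Rpower_O, Hk. }
  assert (Hpow_nz : Rpower (k t) (- alpha) <> 0) by apply Rgt_not_eq, exp_pos.
  assert (Hc : c <> 0).
  { unfold c, Rdiv. apply Rmult_integral_contrapositive_currified; [exact Hpow_nz|].
    apply Rinv_neq_0_compat, Hk'. }
  replace (D * k' t * Rpower (k t) (alpha - 1)) with (D / (k t * c)).
  2:{ transitivity (D / (k t * c) * (k t * Rpower (k t) (- alpha) * Rpower (k t) (alpha - 1))).
      - rewrite Hpow. ring.
      - unfold c. field. repeat split; lra || assumption. }
  apply is_derive_of_exp_reparam; [exact Hk|exact Hc|].
  apply is_derive_Reals, derivable_pt_lim_of_is_lim.
  eapply is_lim_ext; [|exact (Lim_correct' _ _ Hdiff)].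
  intros h. unfold gfd_quotient, c.
  rewrite Rplus_0_l, Rmult_0_l, exp_0, Rmult_1_r.
  replace (t - k t + k t) with t by ring.
  replace (h * (Rpower (k t) (- alpha) / k' t)) with (h * Rpower (k t) (- alpha) / k' t)
    by (unfold Rdiv; ring).
  reflexivity.
Qed.

Theorem mainTheorem5 (a b alpha : R) (k k' f : R -> R)
  (Ha : 0 <= a) (Hab : a < b)
  (Halpha : 0 < alpha <= 1)
  (Hk_cont : continuous_on_Icc k a b)
  (Hk_nonneg : forall t, in_Icc a b t -> 0 <= k t)
  (Hk_deriv : is_derive_on_Icc k k' a b)
  (Hk_nz : forall t, in_Icc a b t -> k t <> 0)
  (Hk'_nz : forall t, in_Icc a b t -> k' t <> 0)
  (Hf_cont : continuous_on_Icc f a b)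
  (Hf_diff : forall t, a < t < b -> alpha_differentiable k k' f alpha t) :
  exists c, a < c < b /\
    gen_frac_deriv k k' f alpha c =
      (f b - f a) / (Rpower (k b) alpha / alpha - Rpower (k a) alpha / alpha).
Proof.
  assert (Hin : forall t, a < t < b -> in_Icc a b t) by (unfold in_Icc; intros; lra).
  assert (Hk_pos : forall t, in_Icc a b t -> 0 < k t).
  { intros t Ht. destruct (Hk_nonneg t Ht); [assumption|].
    exfalso. apply (Hk_nz t Ht). symmetry. assumption. }
  assert (Hk' : forall t, a < t < b -> is_derive k t (k' t))
    by (intros; eapply is_derive_on_Icc_interior; eassumption).
  set (dg := fun t => k' t * Rpower (k t) (alpha - 1)).
  set (gd := Rpower (k b) alpha / alpha - Rpower (k a) alpha / alpha).
  assert (Hgd : gd <> 0).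
  { apply Rpower_div_sub_neq0; [apply Hk_pos; unfold in_Icc; lra..|lra|].
    apply (neq_endpoints_of_derive_neq0 k k' a b Hab Hk_cont Hk').
    intros t Ht. apply Hk'_nz, Hin, Ht. }
  destruct (cauchy_mvt_Icc f (fun x => Rpower (k x) alpha / alpha)
              (fun t => gen_frac_deriv k k' f alpha t * dg t) dg a b Hab Hf_cont)
    as [c [Hc E]].
  - apply continuous_on_Icc_Rpower_div_comp; [lra|exact Hk_cont|exact Hk_pos].
  - intros t Ht. unfold dg. rewrite <- Rmult_assoc.
    apply alpha_differentiable_is_derive; [apply Hk_pos, Hin, Ht|apply Hk'_nz, Hin, Ht|auto].
  - intros t Ht. apply is_derive_Rpower_div_comp; [lra|apply Hk_pos, Hin, Ht|apply Hk', Ht].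
  - exists c. split; [exact Hc|]. cbv beta in E. fold gd in E.
    assert (Hdg : dg c <> 0).
    { apply Rmult_integral_contrapositive_currified; [apply Hk'_nz, Hin, Hc|].
      apply Rgt_not_eq, exp_pos. }
    apply (Rmult_eq_reg_r (dg c)); [|exact Hdg].
    apply (Rmult_eq_reg_l gd); [|exact Hgd].
    rewrite E. field. exact Hgd.
Qed.
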